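(* Let $\delta>0$ and let $K$ be any link contained in the closed ball $B(\delta)$ of radius $\delta$ about the origin in $\mathbb{R}^3$. Then $\Lambda_K\subset\{(q,p,z)\in T^*S\times\mathbb{R}: |p|\le\delta\}$, and every Reeb chord $c$ of $\Lambda_K$ satisfies $\int_c(dz-p\,dq)\le 2\rho_0\delta$, where $\rho_0=\max\{|y|: y\in S\}$.
   Context: $S\subset\mathbb{R}^3$ is the smooth boundary of a compact convex set containing the origin in its interior, symmetric under reflection in the $y_1y_2$-plane and rotations about the $y_3$-axis; $\nu(y)$ is its outward unit normal. $S^*\mathbb{R}^3=\mathbb{R}^3\times S$ with contact form $y\cdot dx$ is identified with $J^1(S)=T^*S\times\mathbb{R}$ (contact form $dz-p\,dq$, $p\in T_qS\subset\mathbb{R}^3$ via the Euclidean metric) by $(x,y)\mapsto(y,x-(x\cdot\nu(y))\nu(y),x\cdot y)$. The conormal lift of $K$ is $\Lambda_K=\{(x,y)\in S^*\mathbb{R}^3: x\in K,\ y\cdot v=0\ \forall v\in T_xK\}$, viewed in $J^1(S)$. A Reeb chord is a segment of a flow line of the Reeb field of $dz-p\,dq$ (i.e. $\partial_z$) with both endpoints on $\Lambda_K$. $|p|$ is the Euclidean length. *)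

From HB Require Import structures.
From mathcomp Require Import all_boot all_order all_algebra.
From mathcomp Require Import all_classical all_reals all_analysis.
Set Implicit Arguments. Unset Strict Implicit. Unset Printing Implicit Defensive.
Import Order.TTheory GRing.Theory Num.Theory.
Import numFieldNormedType.Exports.
Local Open Scope classical_set_scope.
Local Open Scope ring_scope.

Section Defs.
Variable R : realType.

(* R^3 is modelled as row vectors 'rV[R]_3 ; coordinates y1,y2,y3 are
   v 0 0, v 0 1, v 0 2. *)
Notation V3 := 'rV[R]_3.

(* Euclidean inner product and Euclidean norm (the library norm on
   matrices is the sup norm, so we define the Euclidean one). *)
Definition dot (u v : V3) : R := \sum_(i < 3) u ord0 i * v ord0 i.
Definition enorm (u : V3) : R := Num.sqrt (dot u u).

Definition cball0 (delta : R) : set V3 := [set x | enorm x <= delta].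

Definition refl3 (v : V3) : V3 :=
  \row_(i < 3) (if i == 2%N :> nat then - v ord0 i else v ord0 i).
Definition rot3 (th : R) (v : V3) : V3 :=
  \row_(i < 3)
    (if i == 0%N :> nat then cos th * v ord0 0 - sin th * v ord0 1
     else if i == 1%N :> nat then sin th * v ord0 0 + cos th * v ord0 1
     else v ord0 2).

Definition convex_set (C : set V3) : Prop :=
  forall x y t, C x -> C y -> 0 <= t <= 1 -> C (t *: x + (1 - t) *: y).

Definition outward_unit_normal (C : set V3) (y n : V3) : Prop :=
  enorm n = 1 /\ forall c, C c -> dot n (c - y) <= 0.

Definition standing_assumptions (C S : set V3) (nu : V3 -> V3) : Prop :=
  [/\ compact C, convex_set C, (interior C) 0 &
      S = closure C `\` interior C] /\
  [/\ (forall y, S y -> S (refl3 y)),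
      (forall th y, S y -> S (rot3 th y)),
      {in S, continuous nu} &
      (forall y, S y -> outward_unit_normal C y (nu y) /\
         (forall n, outward_unit_normal C y n -> n = nu y))].

Definition smooth_curve (g : R -> V3) : Prop :=
  forall k t, derivable (derive1n k g) t 1.

Definition embedded_circle (g : R -> V3) : Prop :=
  [/\ smooth_curve g,
      (forall t, g (t + 1) = g t),
      (forall t, derive1 g t != 0) &
      (forall s t, 0 <= s < 1 -> 0 <= t < 1 -> g s = g t -> s = t)].

Definition is_link (n : nat) (g : 'I_n -> R -> V3) : Prop :=
  (0 < n)%N /\ (forall i, embedded_circle (g i)) /\
  (forall i j s t, i != j -> g i s <> g j t).

Definition link_set (n : nat) (g : 'I_n -> R -> V3) : set V3 :=
  [set x | exists i t, x = g i t].

(* Unit cotangent bundle S^*R^3 = R^3 x S; conormal lift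
   Lambda_K = {(x,y) : x in K, y in S, y . v = 0 for all v in T_x K},
   where T_x K is spanned by g_i'(t) when x = g_i t. *)
Definition conormal (S : set V3) (n : nat) (g : 'I_n -> R -> V3)
  (x y : V3) : Prop :=
  S y /\ exists i t, x = g i t /\
    (forall v, (exists a : R, v = a *: derive1 (g i) t) -> dot y v = 0).

Record jet := Jet { jq : V3; jp : V3; jz : R }.

Definition to_jet (nu : V3 -> V3) (x y : V3) : jet :=
  Jet y (x - (dot x (nu y)) *: nu y) (dot x y).

Definition LambdaJ (S : set V3) (nu : V3 -> V3) (n : nat)
  (g : 'I_n -> R -> V3) : set jet :=
  [set j | exists x y, conormal S g x y /\ j = to_jet nu x y].

(* A Reeb chord: a segment {(q, p, z) : a <= z <= b}, a < b, of a flow line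
   of the Reeb field d/dz, with both endpoints on Lambda_K. *)
Record reeb_segment := ReebSeg { rq : V3; rp : V3; ra : R; rb : R }.

Definition is_reeb_chord (L : set jet) (c : reeb_segment) : Prop :=
  [/\ ra c < rb c, L (Jet (rq c) (rp c) (ra c)) & L (Jet (rq c) (rp c) (rb c))].

(* Integral of dz - p dq over the chord, parametrised by
   z in [a,b] with q, p constant: dq = 0, so it equals b - a. *)
Definition chord_action (c : reeb_segment) : R := rb c - ra c.

End Defs.

(* A point of Lambda_K is (q, p, z) = (y, x - (x.nu(y)) nu(y), x.y) with x in K
   and y in S.  The momentum p is the orthogonal projection of x onto the
   tangent plane nu(y)^perp, so |p| <= |x| <= delta.  The two endpoints of a
   Reeb chord share q = y, so its action is (x2 - x1).y, which Cauchy-Schwarz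
   bounds by (|x1| + |x2|) |y| <= 2 delta rho0. *)

From HB Require Import structures.
From mathcomp Require Import all_boot all_order all_algebra.
From mathcomp Require Import all_classical all_reals all_analysis.
From mathcomp Require Import ring lra.
Import Order.TTheory GRing.Theory Num.Theory.
Import numFieldNormedType.Exports.
Local Open Scope classical_set_scope.
Local Open Scope ring_scope.

Section EuclideanR3.
Context {R : realType}.
Implicit Types (u v x : 'rV[R]_3) (k : R).

Lemma dotE u v :
  dot u v = u ord0 0 * v ord0 0 + u ord0 1 * v ord0 1 + u ord0 2 * v ord0 2.
Proof.
rewrite /dot !big_ord_recl big_ord0 addr0 addrA.
by congr (_ + _ + _); congr (u ord0 _ * v ord0 _); apply: val_inj.
Qed.

Lemma dotvv_ge0 u : 0 <= dot u u.
Proof. by rewrite dotE; nra. Qed.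

Lemma enorm_ge0 u : 0 <= enorm u.
Proof. exact: sqrtr_ge0. Qed.

Lemma dotvv_enorm1 u : enorm u = 1 -> dot u u = 1.
Proof. by move=> u1; rewrite -(sqr_sqrtr (dotvv_ge0 u)) -/(enorm u) u1 expr1n. Qed.

Lemma dot_subZr u v k :
  dot (u - k *: v) (u - k *: v) = dot u u - 2 * k * dot u v + k ^+ 2 * dot v v.
Proof. by rewrite !dotE !mxE; ring. Qed.

Lemma cauchy_schwarz u v : `|dot u v| <= enorm u * enorm v.
Proof.
rewrite /enorm -sqrtrM ?dotvv_ge0 // -sqrtr_sqr.
rewrite ler_sqrt; last by rewrite mulr_ge0 ?dotvv_ge0.
rewrite !dotE.
set a := u ord0 0; set b := u ord0 1; set c := u ord0 2.
set d := v ord0 0; set e := v ord0 1; set f := v ord0 2.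
(* Lagrange's identity *)
have -> : (a*a + b*b + c*c) * (d*d + e*e + f*f) = (a*d + b*e + c*f) ^+ 2
    + ((a*e - b*d) ^+ 2 + (a*f - c*d) ^+ 2 + (b*f - c*e) ^+ 2) by ring.
by rewrite lerDl !addr_ge0 ?sqr_ge0.
Qed.

Lemma enorm_proj_le x {v} : enorm v = 1 -> enorm (x - dot x v *: v) <= enorm x.
Proof.
move=> /dotvv_enorm1 v1; rewrite /enorm ler_sqrt ?dotvv_ge0 //.
rewrite dot_subZr v1 mulr1 -mulrA -expr2.
by have := sqr_ge0 (dot x v); lra.
Qed.

Lemma dot_subl_le x1 x2 v d r :
  enorm x1 <= d -> enorm x2 <= d -> enorm v <= r -> dot x2 v - dot x1 v <= 2 * r * d.
Proof.
move=> x1d x2d vr.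
have b1 : enorm x1 * enorm v <= d * r by rewrite ler_pM ?enorm_ge0.
have b2 : enorm x2 * enorm v <= d * r by rewrite ler_pM ?enorm_ge0.
have := cauchy_schwarz x1 v; have := cauchy_schwarz x2 v.
have := ler_norm (dot x2 v); have := ler_norm (- dot x1 v); rewrite normrN.
lra.
Qed.

End EuclideanR3.

Lemma LambdaJP (R : realType) (S : set 'rV[R]_3) (nu : 'rV[R]_3 -> 'rV[R]_3)
    (n : nat) (g : 'I_n -> R -> 'rV[R]_3) (j : jet R) :
  LambdaJ S nu g j ->
  exists2 x, link_set g x &
    [/\ S (jq j), jp j = x - dot x (nu (jq j)) *: nu (jq j) & jz j = dot x (jq j)].
Proof. by move=> [x [y [[Sy [i [t [-> _]]]] ->]]]; exists (g i t) => //; exists i, t. Qed.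

Theorem lemma3p3 (R : realType) (C S : set 'rV[R]_3) (nu : 'rV[R]_3 -> 'rV[R]_3)
  (rho0 delta : R) (n : nat) (g : 'I_n -> R -> 'rV[R]_3) :
  standing_assumptions C S nu ->
  (forall y, S y -> enorm y <= rho0) -> (exists y, S y /\ enorm y = rho0) ->
  0 < delta ->
  is_link g ->
  link_set g `<=` cball0 delta ->
  (LambdaJ S nu g `<=` [set j | enorm (jp j) <= delta]) /\
  (forall c, is_reeb_chord (LambdaJ S nu g) c ->
     chord_action c <= 2 * rho0 * delta).
Proof.
move=> [_ [_ _ _ nu_normal]] S_rho0 _ _ _ K_delta; split.
  move=> j /LambdaJP[x Kx [Sq jpE _]]; rewrite /= jpE.
  have [[nu1 _] _] := nu_normal _ Sq.
  apply: le_trans (enorm_proj_le x nu1) _; exact: K_delta.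
move=> [q p a b] [_ /LambdaJP[x1 Kx1 [Sq _ /= ->]] /LambdaJP[x2 Kx2 [_ _ /= ->]]].
exact: dot_subl_le (K_delta _ Kx1) (K_delta _ Kx2) (S_rho0 _ Sq).
Qed.
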